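(* For every $n\ge1$ and $k\ge0$, the number of words $w\in\mathcal{P}_{n-1}^2(321)$ with $\mathrm{des}(w)=k$ equals the number of $321$-avoiding permutations of $[n]$ with exactly $k$ peaks.
   Context: $\mathfrak{S}_n$ is the set of permutations of $[n]=\{1,\dots,n\}$; $\mathrm{FIX}(\pi)=\{i:\pi(i)=i\}$. A $2$-arrangement of $[n]$ is a pair $(\pi,\phi)$ with $\pi\in\mathfrak{S}_n$ and $\phi:\mathrm{FIX}(\pi)\to\{-1,-2\}$ arbitrary. Its permutation form is obtained from $\pi(1)\cdots\pi(n)$ by replacing $\pi(i)$ with $-1$ for each $i\in\mathrm{FIX}(\pi)$ with $\phi(i)=-1$, then replacing every occurrence of the $j$-th smallest positive letter by $j$ for all $j$. $\mathcal{P}_n^2$ is the set of these permutation forms ($\mathcal{P}_0^2$ consists of the empty word). For an integer word $w=w_1\cdots w_n$, $\mathrm{des}(w)=|\{i\in[n-1]:w_i>w_{i+1}\}|$; $\mathrm{red}(w)$ replaces every occurrence of the $j$-th smallest letter by $j$; $w$ avoids $\sigma\in\mathfrak{S}_3$ if there are no $i_1<i_2<i_3$ with $\mathrm{red}(w_{i_1}w_{i_2}w_{i_3})=\sigma$; $\mathcal{P}_n^2(\sigma)$ is the set of words of $\mathcal{P}_n^2$ avoiding $\sigma$. A peak of a permutation $\pi\in\mathfrak{S}_n$ is an index $i$ with $1<i<n$ and $\pi_{i-1}<\pi_i>\pi_{i+1}$. *)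

From mathcomp Require Import all_boot all_order all_algebra all_fingroup.
Set Implicit Arguments. Unset Strict Implicit. Unset Printing Implicit Defensive.
Import Order.TTheory GRing.Theory Num.Theory.
Local Open Scope ring_scope.

Definition red (w : seq int) : seq nat :=
  [seq (count (fun y => y < x) (undup w)).+1 | x <- w].

Definition avoids (sigma : seq nat) (w : seq int) : bool :=
  [forall i : 'I_(size w), forall j : 'I_(size w), forall l : 'I_(size w),
     ~~ [&& (i < j)%N, (j < l)%N &
            red [:: nth (0:int) w i; nth (0:int) w j; nth (0:int) w l] == sigma]].

Definition pat321 : seq nat := [:: 3%N; 2%N; 1%N].

Definition des (w : seq int) : nat :=
  (  \sum_(i < (size w).-1) nat_of_bool (nth (0:int) w i.+1 < nth (0:int) w i)%R)%N.

Definition std_pos (w : seq int) : seq int :=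
  [seq (if 0 < x then ((count (fun y => (0 < y) && (y < x)) (undup w)).+1)%:Z
        else x) | x <- w].

Definition perm_word n (s : 'S_n) : seq int :=
  [seq ((val (s i)).+1)%:Z | i <- enum 'I_n].

(* Permutation form of the 2-arrangement (s, phi); phi i = true encodes
   phi(i) = -1 and phi i = false encodes phi(i) = -2 (only values at
   fixed points matter). *)
Definition perm_form n (s : 'S_n) (phi : {ffun 'I_n -> bool}) : seq int :=
  std_pos [seq (if (s i == i) && phi i then -1 else ((val (s i)).+1)%:Z)
          | i <- enum 'I_n].

Definition P2 (n : nat) : seq (seq int) :=
  undup [seq perm_form s phi | s <- enum [set: 'S_n],
                               phi <- enum [set: {ffun 'I_n -> bool}]].

Definition peaks n (s : 'S_n) : nat :=
  let w := perm_word s in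
  (\sum_(1 <= i < n.-1)
     nat_of_bool ((nth (0:int) w i.-1 < nth 0 w i) && (nth (0:int) w i.+1 < nth 0 w i))%R)%N.

(* Cutting off the first letter [a] of a permutation of [0..m], replacing the
   letters below [a] by -1 and lowering those above [a] by [a] gives a word of
   P^2_m, whose positive letters form a permutation of [1..m-a].  On the
   permutations with no 321 pattern through their first letter this map is a
   bijection onto P^2_m: there the letters below [a] appear in increasing
   order, so they can be refilled.  For such permutations, avoiding 321 is
   equivalent for the permutation and for its image, and a descent of the image
   at [i] is a descent of the permutation at [i+1]; in a 321-avoiding
   permutation the letter before such a descent top is smaller, so these
   descents are exactly the peaks. *)

From mathcomp Require Import all_boot all_order all_algebra all_fingroup.
Set Implicit Arguments. Unset Strict Implicit. Unset Printing Implicit Defensive.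
Import Order.TTheory GRing.Theory Num.Theory.

Local Notation pos_part w := [seq x <- w | (0 < x)%R].

Lemma red_eq_pat321 (a b c : int) :
  (red [:: a; b; c] == pat321) = ((c < b) && (b < a))%R.
Proof.
apply/idP/andP => [|[cb ba]]; last first.
  have ca := lt_trans cb ba.
  rewrite /red /pat321 /= !inE (gt_eqF ba) (gt_eqF ca) (gt_eqF cb) /=.
  by rewrite !ltxx ba ca cb (lt_gtF ba) (lt_gtF ca) (lt_gtF cb).
rewrite /red /pat321 /= => /eqP [].
move: (if _ then _ else _) => U Ha Hb Hc.
have count_lt_mono x y : (x <= y)%R ->
    (count (fun z => z < x)%R U <= count (fun z => z < y)%R U)%N.
  by move=> xy; apply: sub_count => z /= zx; apply: lt_le_trans zx xy.
split; rewrite ltNge; apply/negP.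
- by move/count_lt_mono; rewrite Hb Hc.
- by move/count_lt_mono; rewrite Ha Hb.
Qed.

Definition avoids321 (w : seq int) : Prop :=
  forall i j l, (i < j)%N -> (j < l)%N -> (l < size w)%N ->
    ~~ ((w`_l < w`_j) && (w`_j < w`_i))%R.

Lemma avoids321P w : avoids pat321 w <-> avoids321 w.
Proof.
split => [/forallP avw i j l ij jl ls | avw].
  have js := ltn_trans jl ls; have is' := ltn_trans ij js.
  move/forallP: (avw (Ordinal is')) => /(_ (Ordinal js)) /forallP.
  by move=> /(_ (Ordinal ls)); rewrite /= ij jl red_eq_pat321.
apply/forallP => i; apply/forallP => j; apply/forallP => l.
rewrite red_eq_pat321; apply/negP => /and3P [ij jl pat].
by move: (avw i j l ij jl (ltn_ord l)); rewrite pat.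
Qed.

Lemma count_lt_count (T : eqType) (a1 a2 : pred T) (s : seq T) x :
  subpred a1 a2 -> x \in s -> a2 x -> ~~ a1 x -> (count a1 s < count a2 s)%N.
Proof.
move=> a12; elim: s => [//|y s IH]; rewrite inE => /orP [/eqP <-|xs] a2x a1x /=.
  by rewrite (negbTE a1x) a2x add0n add1n ltnS sub_count.
case a1y: (a1 y); last by rewrite add0n (leq_trans (IH xs a2x a1x)) ?leq_addl.
by rewrite (a12 y a1y) !add1n ltnS IH.
Qed.

Lemma count_lt_iota c k v : (c <= v <= c + k)%N ->
  count (fun i => i < v)%N (iota c k) = (v - c)%N.
Proof.
case/andP => cv vck; rewrite -size_filter -{1}(subnKC cv) filter_iota_ltn.
  by rewrite size_iota.
by rewrite leq_subLR.
Qed.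

Lemma count_iota_prefix_lt (P : pred nat) i j :
  (i < j)%N -> P i -> (count P (iota 0 i) < count P (iota 0 j))%N.
Proof.
move=> ij Pi; rewrite -(subnKC (ltnW ij)) iotaD count_cat add0n -(subnSK ij) /=.
by rewrite Pi add1n addnS ltnS leq_addr.
Qed.

Lemma undup_map_in (T1 T2 : eqType) (f : T1 -> T2) (s : seq T1) :
  {in s &, injective f} -> undup (map f s) = map f (undup s).
Proof.
elim: s => [//|x s IH] /= finj.
rewrite IH; last by move=> y z ys zs; apply: finj; rewrite inE ?ys ?zs orbT.
have -> : (f x \in map f s) = (x \in s).
  apply/mapP/idP => [[y ys fxy]|xs]; last by exists x.
  by rewrite (finj x y) // !inE ?ys ?eqxx ?orbT.
by case: (x \in s).
Qed.

Lemma uniq_filter_nth_inj (T : eqType) (a : pred T) (s : seq T) x0 i j :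
  uniq (filter a s) -> (i < size s)%N -> (j < size s)%N ->
  a (nth x0 s i) -> nth x0 s i = nth x0 s j -> i = j.
Proof.
elim: s i j => [//|y s IH] [|i] [|j] //= u il jl ai eij.
- have: y \in filter a s by rewrite mem_filter ai eij mem_nth.
  by move: u; rewrite /= ai /= => /andP [/negP].
- have: y \in filter a s by rewrite -eij mem_filter ai mem_nth.
  by move: u; rewrite /= -eij ai /= eij => /andP [/negP].
- congr _.+1; apply: IH il jl ai eij.
  by move: u; rewrite /=; case: (a y) => //= /andP [].
Qed.

Lemma perm_ranks (s : seq int) : uniq s ->
  perm_eq [seq Posz (count (fun y => y < x)%R s).+1 | x <- s]
          [seq Posz i | i <- iota 1 (size s)].
Proof.
move=> us.
have rank_lt x y : x \in s -> (x < y)%R ->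
    (count (fun z => z < x)%R s < count (fun z => z < y)%R s)%N.
  move=> xs xy; apply: count_lt_count xs _ _; rewrite /= ?xy ?ltxx //.
  by move=> z /= zx; apply: lt_trans zx xy.
have ranks_uniq : uniq [seq Posz (count (fun y => y < x)%R s).+1 | x <- s].
  rewrite map_inj_in_uniq // => x y xs ys [] exy.
  by case: (ltgtP x y) => // [/(rank_lt _ _ xs)|/(rank_lt _ _ ys)]; rewrite exy ltnn.
have ranks_sub : {subset [seq Posz (count (fun y => y < x)%R s).+1 | x <- s]
                    <= [seq Posz i | i <- iota 1 (size s)]}.
  move=> _ /mapP [x xs ->]; rewrite mem_map; last by move=> ? ? [].
  rewrite mem_iota add1n ltnS /= -(count_predT s).
  by apply: count_lt_count xs _ _; rewrite /= ?ltxx.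
have [|_ ranks_mem] := uniq_min_size ranks_uniq ranks_sub.
  by rewrite !size_map size_iota.
by apply: uniq_perm => //; rewrite map_inj_uniq ?iota_uniq // => ? ? [].
Qed.

(** * Standardization and the words of P^2_m *)

Definition arr_word (w : seq int) : bool :=
  all (fun x => (x == -1) || (0 < x))%R w &&
  perm_eq (pos_part w) [seq Posz i | i <- iota 1 (size (pos_part w))].

Definition std_rank (u : seq int) (x : int) : nat :=
  count (fun y => (0 < y) && (y < x))%R (undup u).

Lemma std_posE u :
  std_pos u = [seq if (0 < x)%R then Posz (std_rank u x).+1 else x | x <- u].
Proof. by []. Qed.

Lemma std_rankE u x : std_rank u x = count (fun y => y < x)%R (undup (pos_part u)).
Proof.
by rewrite /std_rank -filter_undup count_filter; apply: eq_count => y; rewrite /= andbC.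
Qed.

Lemma arr_word_std_pos u :
  all (fun x => (x == -1) || (0 < x))%R u -> uniq (pos_part u) -> arr_word (std_pos u).
Proof.
move=> letters upos; rewrite /arr_word.
have pos_std x : (0 < if (0 < x)%R then Posz (std_rank u x).+1 else x)%R = (0 < x)%R.
  by case: ifP.
have -> : pos_part (std_pos u) =
          [seq Posz (count (fun y => y < x)%R (pos_part u)).+1 | x <- pos_part u].
  rewrite std_posE filter_map (eq_filter pos_std); apply/eq_in_map => x.
  by rewrite mem_filter => /andP [-> _]; rewrite std_rankE undup_id.
apply/andP; split; last by rewrite size_map; apply: perm_ranks.
rewrite std_posE all_map; apply: sub_all letters => x /=.
by rewrite pos_std; case: ifP => // x0; rewrite x0 orbT.
Qed.

Lemma std_pos_map (u : seq int) (f : int -> int) :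
  {in u, forall x, ~~ (0 < x)%R -> f x = x} ->
  {in u, forall x, (0 < x)%R -> (0 < f x)%R} ->
  {in pos_part u &, {mono f : x y / (x < y)%R}} ->
  std_pos (map f u) = std_pos u.
Proof.
move=> f_nonpos f_pos f_mono.
have pos_f : {in u, forall x, (0 < f x)%R = (0 < x)%R}.
  move=> x xu; case: (boolP (0 < x)%R) => [x0 | xn]; first by rewrite f_pos.
  by rewrite f_nonpos // (negbTE xn).
have f_inj : {in pos_part u &, injective f}.
  move=> x y xu yu fxy; apply/eqP.
  by rewrite eq_le !leNgt -(f_mono _ _ yu xu) -(f_mono _ _ xu yu) fxy ltxx.
rewrite !std_posE -map_comp; apply/eq_in_map => x xu /=.
rewrite pos_f //; case: ifP => [x0|]; last by move/negbT/(f_nonpos _ xu).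
rewrite !std_rankE filter_map (eq_in_filter pos_f) undup_map_in // count_map.
congr (Posz _.+1); apply: eq_in_count => y; rewrite mem_undup => yu /=.
by apply: f_mono; rewrite // mem_filter x0.
Qed.

Lemma std_pos_id w : arr_word w -> std_pos w = w.
Proof.
case/andP => _ pw; rewrite std_posE -[RHS]map_id; apply/eq_in_map => x xw /=.
case: ifP => // x0.
have ws_uniq : uniq (pos_part w).
  by rewrite (perm_uniq pw) map_inj_uniq ?iota_uniq // => ? ? [].
rewrite std_rankE undup_id // (seq.permP pw) count_map.
have : x \in [seq Posz i | i <- iota 1 (size (pos_part w))].
  by rewrite -(perm_mem pw) mem_filter x0.
case/mapP => v; rewrite mem_iota => /andP [v1 vp] ->.
congr Posz; rewrite (eq_count (a2 := fun i => i < v)%N) => [|i]; last exact: ltz_nat.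
by rewrite count_lt_iota ?v1 ?(ltnW vp) // subn1 prednK.
Qed.

Section ArrangementWord.
Variable w : seq int.
Hypothesis arr_w : arr_word w.

Lemma arr_word_letter i : (i < size w)%N -> (w`_i == -1)%R || (0 < w`_i)%R.
Proof. by case/andP: arr_w => /all_nthP letters _; apply: letters. Qed.

Lemma arr_word_pos i : (i < size w)%N -> (w`_i != -1)%R -> (0 < w`_i)%R.
Proof. by move=> iw; case/orP: (arr_word_letter iw) => [->|]. Qed.

Lemma arr_word_pos_inj i j : (i < size w)%N -> (j < size w)%N ->
  (0 < w`_i)%R -> (w`_i = w`_j)%R -> i = j.
Proof.
apply: uniq_filter_nth_inj; case/andP: arr_w => _ /perm_uniq ->.
by rewrite map_inj_uniq ?iota_uniq // => ? ? [].
Qed.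

Lemma arr_word_pos_le x : x \in w -> (0 < x)%R -> (`|x| <= size (pos_part w))%N.
Proof.
move=> xw x0; case/andP: arr_w => _ /perm_mem pw.
have : x \in pos_part w by rewrite mem_filter x0.
by rewrite pw => /mapP [v]; rewrite mem_iota add1n ltnS => /andP [_ ?] ->.
Qed.

End ArrangementWord.

Lemma ltz_pos_absz (x y : int) : (0 < x)%R -> (0 < y)%R -> (x < y)%R = (`|x| < `|y|)%N.
Proof. by case: x => // a; case: y. Qed.

Lemma P2_arr_word m w : w \in P2 m -> (size w == m) && arr_word w.
Proof.
rewrite mem_undup => /allpairsP [[s phi] [_ _ ->]]; rewrite /perm_form.
set letter := fun i : 'I_m => if (s i == i) && phi i then (-1)%R else Posz (s i).+1.
apply/andP; split; first by rewrite size_map size_map size_enum_ord.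
apply: arr_word_std_pos.
  by rewrite all_map; apply/allP => i _ /=; rewrite /letter; case: ifP.
rewrite filter_map map_inj_in_uniq ?filter_uniq -?enumT ?enum_uniq // => i j.
rewrite !mem_filter /= /letter => /andP [+ _] /andP [+ _].
by do 2 case: ifP => // _; move=> _ _ [] /val_inj /perm_inj.
Qed.

Section ArrWordToP2.
Variables (m : nat) (w : seq int).
Hypotheses (size_w : size w = m) (arr_w : arr_word w).

(* The
   permutation [arr_perm] moves each positive letter [x] to [target x] and fixes
   the other positions, which become -1; its permutation form is then [w]
   relabelled by an increasing map, so it standardizes back to [w]. *)
Let bs := [seq i <- iota 0 m | (0 < w`_i)%R].
Let target (x : int) : nat := nth 0%N bs (`|x| - 1).

Lemma arr_word_target_index x : x \in pos_part w -> (`|x| - 1 < size bs)%N.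
Proof.
rewrite mem_filter => /andP [x0 xw].
have -> : size bs = size (pos_part w).
  by rewrite !size_filter -{2}(mkseq_nth 0%R w) size_w count_map.
rewrite subn1 (leq_trans _ (arr_word_pos_le arr_w xw x0)) // ltn_predL.
by rewrite absz_gt0 gt_eqF.
Qed.

Lemma arr_word_target_pos x :
  x \in pos_part w -> (target x < m)%N && (0 < w`_(target x))%R.
Proof.
move=> xw; have := mem_nth 0%N (arr_word_target_index xw).
by rewrite mem_filter mem_iota andbC.
Qed.

Lemma arr_word_target_mono :
  {in pos_part w &, {mono target : x y / (x < y)%R >-> (x < y)%N}}.
Proof.
have bs_sorted : sorted ltn bs := sorted_filter ltn_trans _ (iota_ltn_sorted 0 m).
have nth_mono := leqW_mono_in (leq_mono_in (sorted_ltn_nth ltn_trans 0%N bs_sorted)).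
move=> x y xw yw; rewrite /target nth_mono ?inE; last 2 first.
- exact: arr_word_target_index xw.
- exact: arr_word_target_index yw.
move: xw yw; rewrite !mem_filter => /andP [x0 _] /andP [y0 _].
by rewrite ltn_sub2rE ?(ltz_pos_absz x0 y0) // absz_gt0 gt_eqF.
Qed.

Let arr_perm (i : 'I_m) : 'I_m := if (0 < w`_i)%R then insubd i (target w`_i) else i.

Lemma arr_word_nth_pos_part i : (i < m)%N -> (0 < w`_i)%R -> (w`_i)%R \in pos_part w.
Proof. by move=> im wi; rewrite mem_filter wi mem_nth ?size_w. Qed.

Lemma val_arr_perm i : val (arr_perm i) = if (0 < w`_i)%R then target w`_i else val i.
Proof.
rewrite /arr_perm; case: ifP => // wi; rewrite insubdK //.
by case/andP: (arr_word_target_pos (arr_word_nth_pos_part (ltn_ord i) wi)).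
Qed.

Lemma arr_perm_inj : injective arr_perm.
Proof.
have target_inj : {in pos_part w &, injective target}.
  move=> x y xw yw e; apply/eqP; rewrite eq_le !leNgt.
  by rewrite -(arr_word_target_mono yw xw) -(arr_word_target_mono xw yw) e ltnn.
move=> i j /(congr1 val); rewrite !val_arr_perm.
case: (boolP (0 < w`_i)%R) => wi; case: (boolP (0 < w`_j)%R) => wj.
- move/target_inj; rewrite !arr_word_nth_pos_part // => /(_ isT isT) e.
  by apply: val_inj; apply: (arr_word_pos_inj arr_w); rewrite ?size_w ?ltn_ord.
- move=> e; have := arr_word_target_pos (arr_word_nth_pos_part (ltn_ord i) wi).
  by rewrite e (negbTE wj) andbF.
- move=> e; have := arr_word_target_pos (arr_word_nth_pos_part (ltn_ord j) wj).
  by rewrite -e (negbTE wi) andbF.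
- exact: val_inj.
Qed.

Lemma arr_word_P2 : w \in P2 m.
Proof.
pose f x := if (0 < x)%R then Posz (target x).+1 else x.
have <- : std_pos (map f w) = w.
  rewrite std_pos_map ?std_pos_id // => [x _ /negbTE|x _ x0|x y xw yw]; rewrite /f.
  - by move->.
  - by rewrite x0.
  move: (xw) (yw); rewrite !mem_filter => /andP [x0 _] /andP [y0 _].
  by rewrite x0 y0 ltz_nat ltnS arr_word_target_mono.
rewrite mem_undup; apply/allpairsP.
exists (perm arr_perm_inj, [ffun i : 'I_m => ~~ (0 < w`_i)%R]).
split; rewrite ?mem_enum ?inE //= /perm_form; congr std_pos.
rewrite -{1}(mkseq_nth 0%R w) size_w /mkseq -val_enum_ord -!map_comp.
apply/eq_in_map => i _ /=; rewrite permE ffunE /f.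
case: ifP => wi; first by rewrite andbF /= val_arr_perm wi.
have /val_inj -> : val (arr_perm i) = val i by rewrite val_arr_perm wi.
have iw : (i < size w)%N by rewrite size_w.
by have := arr_word_letter arr_w iw; rewrite wi orbF eqxx => /eqP.
Qed.

End ArrWordToP2.

Lemma mem_P2 m w : (w \in P2 m) = (size w == m) && arr_word w.
Proof.
apply/idP/andP => [/P2_arr_word/andP // | [/eqP size_w arr_w]].
exact: arr_word_P2.
Qed.

(** * Cutting off the first letter of a permutation *)

Section PermutationSide.
Variable m : nat.
Implicit Types s t : 'S_m.+1.

Definition pval s (x : nat) : nat := s (inord x).

Lemma pval_le s x : (pval s x <= m)%N.
Proof. by rewrite -ltnS ltn_ord. Qed.

Lemma pval_inj s x y : (x <= m)%N -> (y <= m)%N -> pval s x = pval s y -> x = y.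
Proof.
by move=> xm ym /val_inj /perm_inj /(congr1 (@nat_of_ord _)); rewrite !inordK.
Qed.

Lemma count_pval_lt s v : (v <= m.+1)%N ->
  count (fun x => pval s x < v)%N (iota 0 m.+1) = v.
Proof.
move=> vm; rewrite -(count_map (pval s) (fun y => y < v)%N).
have pval_perm : perm_eq (map (pval s) (iota 0 m.+1)) (iota 0 m.+1).
  apply: uniq_perm.
  - by rewrite map_inj_in_uniq ?iota_uniq // => x y; rewrite !mem_iota; apply: pval_inj.
  - exact: iota_uniq.
  move=> v'; rewrite mem_iota; apply/mapP/idP => [[x _ ->]|v'm].
    by rewrite /= ltnS pval_le.
  exists (val ((s^-1)%g (inord v'))); first by rewrite mem_iota /=.
  by rewrite /pval inord_val permKV inordK.
by rewrite (seq.permP pval_perm) count_lt_iota ?subn0.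
Qed.

Lemma nth_perm_word s i : (i <= m)%N -> ((perm_word s)`_i)%R = Posz (pval s i).+1.
Proof.
move=> im; rewrite /perm_word (nth_map ord0) ?size_enum_ord //.
suff -> : nth ord0 (enum 'I_m.+1) i = inord i by [].
by apply: val_inj; rewrite /= nth_enum_ord // inordK.
Qed.

Definition pval_avoids321 s := forall i j l, (i < j)%N -> (j < l)%N -> (l <= m)%N ->
  ~~ ((pval s l < pval s j) && (pval s j < pval s i))%N.

Definition head321free s := forall j l, (0 < j)%N -> (j < l)%N -> (l <= m)%N ->
  ~~ ((pval s l < pval s j) && (pval s j < pval s 0))%N.

Lemma avoids321_perm_word s : avoids321 (perm_word s) <-> pval_avoids321 s.
Proof.
have size_pw : size (perm_word s) = m.+1 by rewrite size_map size_enum_ord.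
have pattern_pw i j l : (i < j)%N -> (j < l)%N -> (l <= m)%N ->
    (((perm_word s)`_l < (perm_word s)`_j) && ((perm_word s)`_j < (perm_word s)`_i))%R
    = ((pval s l < pval s j) && (pval s j < pval s i))%N.
  move=> ij jl lm; have jm : (j < m)%N := leq_trans jl lm.
  by rewrite !nth_perm_word ?(ltnW jm) ?(ltnW (ltn_trans ij jm)) // !ltz_nat !ltnS.
split => avs i j l ij jl lm; last by rewrite size_pw ltnS in lm; rewrite pattern_pw ?avs.
by rewrite -pattern_pw ?avs ?size_pw.
Qed.

Lemma pval_avoids321_head s : pval_avoids321 s -> head321free s.
Proof. by move=> avs; apply: avs. Qed.

Definition cut_letter (a v : nat) : int := if (v < a)%N then (-1)%R else Posz (v - a).

Lemma cut_letter_eqN1 a v : (cut_letter a v == -1)%R = (v < a)%N.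
Proof. by rewrite /cut_letter; case: ltnP. Qed.

Lemma cut_letter_homo a : {homo cut_letter a : v v' / (v <= v')%N >-> (v <= v')%R}.
Proof.
move=> v v' vv'; rewrite /cut_letter; case: ltnP => va; case: ltnP => v'a //.
- by move: (leq_trans va vv'); rewrite leqNgt v'a.
- by rewrite lez_nat leq_sub2r.
Qed.

Lemma cut_letter_lt a v v' : (cut_letter a v < cut_letter a v')%R -> (v < v')%N.
Proof. by apply: contraTT; rewrite -!leNgt -leqNgt; apply: cut_letter_homo. Qed.

Lemma cut_letter_ltE a v v' : (a <= v')%N ->
  (cut_letter a v < cut_letter a v')%R = (v < v')%N.
Proof.
move=> av'; apply/idP/idP => [|vv']; first exact: cut_letter_lt.
rewrite /cut_letter [(v' < a)%N]ltnNge av' /=; case: ltnP => // av.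
by rewrite ltz_nat ltn_sub2rE.
Qed.

Definition cut_head s : seq int :=
  [seq cut_letter (pval s 0) (pval s i.+1) | i <- iota 0 m].

Lemma size_cut_head s : size (cut_head s) = m.
Proof. by rewrite size_map size_iota. Qed.

Lemma nth_cut_head s i : (i < m)%N ->
  ((cut_head s)`_i)%R = cut_letter (pval s 0) (pval s i.+1).
Proof. by move=> im; rewrite (nth_map 0%N) ?size_iota // nth_iota. Qed.

Lemma avoids321_cut_head s : pval_avoids321 s -> avoids321 (cut_head s).
Proof.
move=> avs i j l ij jl; rewrite size_cut_head => lm.
have jm := ltn_trans jl lm; have im := ltn_trans ij jm.
rewrite !nth_cut_head //; apply/negP => /andP [/cut_letter_lt lj /cut_letter_lt ji].
by move: (avs i.+1 j.+1 l.+1 ij jl lm); rewrite lj ji.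
Qed.

Lemma cut_head_avoids321 s :
  head321free s -> avoids321 (cut_head s) -> pval_avoids321 s.
Proof.
move=> hfree avc [|i] j l ij jl lm; first exact: hfree.
apply/negP => /andP [lj ji].
have j_big : (pval s 0 <= pval s j)%N.
  rewrite leqNgt; apply/negP => j_small.
  by move: (hfree j l (ltn_trans (ltn0Sn i) ij) jl lm); rewrite lj j_small.
case: j ij jl lj ji j_big => // j ij jl lj ji j_big.
case: l jl lm lj => // l jl lm lj.
have jm : (j < m)%N := ltn_trans (jl : (j < l)%N) lm.
have im : (i < m)%N := ltn_trans (ij : (i < j)%N) jm.
have := avc i j l ij jl; rewrite size_cut_head => /(_ lm).
rewrite !nth_cut_head // !cut_letter_ltE ?lj ?ji //.
exact: leq_trans j_big (ltnW ji).
Qed.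

Lemma des_cut_head s : pval_avoids321 s -> des (cut_head s) = peaks s.
Proof.
move=> avs; have hfree := pval_avoids321_head avs.
rewrite /des size_cut_head /peaks (big_addn 0 _ 1) big_mkord subn1.
apply: eq_bigr => i _; have im : (i.+1 < m)%N by rewrite -ltn_predRL ltn_ord.
rewrite addn1 /= !nth_cut_head ?(ltnW im) //.
rewrite !nth_perm_word ?(ltnW im) ?(ltnW (ltnW im)) //.
rewrite !ltz_nat !ltnS; congr nat_of_bool.
have ascent_before_descent : (pval s i.+2 < pval s i.+1)%N -> (pval s i < pval s i.+1)%N.
  move=> desc; move: (avs i i.+1 i.+2 (ltnSn _) (ltnSn _) im).
  rewrite desc /= -leqNgt leq_eqVlt => /orP [/eqP eq_i|//].
  by have /n_Sn := pval_inj (ltnW (ltnW im)) (ltnW im) eq_i.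
apply/idP/idP => [/cut_letter_lt desc | /andP [_ desc]].
  by rewrite desc ascent_before_descent.
rewrite cut_letter_ltE // leqNgt; apply/negP => small.
by move: (hfree i.+1 i.+2 (ltn0Sn _) (ltnSn _) im); rewrite desc small.
Qed.

Lemma cut_letter_pos a v : (0 < cut_letter a v)%R = (a < v)%N.
Proof.
by rewrite /cut_letter; case: ltnP => [va|av]; rewrite ?ltz_nat ?subn_gt0 // ltnNge ltnW.
Qed.

Lemma count_above_head s :
  count (fun i => pval s 0 < pval s i.+1)%N (iota 0 m) = (m - pval s 0)%N.
Proof.
have := count_pval_lt s (pval_le s 0 : (pval s 0).+1 <= m.+1)%N.
rewrite /= ltnSn (iotaDl 1 0) count_map add1n.
move=> [] below; have := count_predC (fun i => pval s 0 < pval s i.+1)%N (iota 0 m).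
have -> : count (predC (fun i => pval s 0 < pval s i.+1)%N) (iota 0 m) = pval s 0.
  by rewrite -[RHS]below; apply: eq_count => i; rewrite /= add1n ltnS ltnNge negbK.
by rewrite size_iota => sum; rewrite -[X in (X - _)%N]sum addnK.
Qed.

Lemma arr_word_cut_head s : arr_word (cut_head s).
Proof.
set a := pval s 0.
have pos_cut : pos_part (cut_head s) =
    [seq cut_letter a (pval s i.+1) | i <- iota 0 m & (a < pval s i.+1)%N].
  by rewrite filter_map; congr map; apply: eq_filter => i; rewrite /= cut_letter_pos.
have cut_above i :
    (a < pval s i.+1)%N -> cut_letter a (pval s i.+1) = Posz (pval s i.+1 - a).
  by move=> ai; rewrite /cut_letter ltnNge (ltnW ai).
apply/andP; split.
  apply/allP => _ /mapP [i + ->]; rewrite mem_iota => /andP [_ im].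
  rewrite /cut_letter; case: ltnP => //= ai.
  rewrite ltz_nat subn_gt0 ltn_neqAle ai andbT; apply/eqP => /esym.
  by move/pval_inj => /(_ im (leq0n _)).
have pos_uniq : uniq (pos_part (cut_head s)).
  rewrite pos_cut map_inj_in_uniq ?filter_uniq ?iota_uniq // => i j.
  rewrite !mem_filter !mem_iota => /andP [ai /andP [_ im]] /andP [aj /andP [_ jm]].
  rewrite !cut_above // => -[] /(congr1 (addn^~ a)).
  rewrite (subnK (ltnW ai)) (subnK (ltnW aj)).
  by move/pval_inj => /(_ im jm) [].
have pos_sub : {subset pos_part (cut_head s) <= [seq Posz v | v <- iota 1 (m - a)]}.
  rewrite pos_cut => _ /mapP [i + ->].
  rewrite mem_filter mem_iota => /andP [ai /andP [_ im]].
  rewrite cut_above // mem_map; last by move=> ? ? [].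
  by rewrite mem_iota subn_gt0 ai add1n ltnS leq_sub2r // pval_le.
have size_pos : size (pos_part (cut_head s)) = (m - a)%N.
  by rewrite pos_cut size_map size_filter count_above_head.
have [|_ pos_mem] := uniq_min_size pos_uniq pos_sub.
  by rewrite size_map size_iota size_pos.
rewrite size_pos; apply: uniq_perm => //.
by rewrite map_inj_uniq ?iota_uniq // => ? ? [].
Qed.

Definition negs_before (w : seq int) (i : nat) : nat :=
  count (fun j => w`_j == -1)%R (iota 0 i).

Lemma negs_before_lt w i j :
  (i < j)%N -> (w`_i == -1)%R -> (negs_before w i < negs_before w j)%N.
Proof. exact: count_iota_prefix_lt. Qed.

(* The inverse of [cut_head] on [head321free] permutations: the head is the
   number of -1's, and the -1's, whose letters must increase, are refilled by
   0, 1, 2, ... from left to right. *)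
Definition uncut (w : seq int) (x : nat) : nat :=
  if x is i.+1 then
    if (w`_i == -1)%R then negs_before w i else (negs_before w (size w) + `|(w`_i)%R|)%N
  else negs_before w (size w).

Lemma negs_before_cut_head s : negs_before (cut_head s) m = pval s 0.
Proof.
rewrite /negs_before (@eq_in_count _ _ (fun i => pval s i.+1 < pval s 0)%N); last first.
  by move=> i; rewrite mem_iota => /andP [_ im]; rewrite nth_cut_head // cut_letter_eqN1.
have := count_pval_lt s (leqW (pval_le s 0)).
by rewrite /= ltnn (iotaDl 1 0) count_map.
Qed.

Lemma negs_before_cut_head_below s i : head321free s -> (i < m)%N ->
  (pval s i.+1 < pval s 0)%N -> negs_before (cut_head s) i = pval s i.+1.
Proof.
move=> hfree im small; set v := pval s i.+1.
have := count_pval_lt s (leqW (pval_le s i.+1)); rewrite -/v /=.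
have -> : (pval s 0 < v)%N = false by apply/negbTE; rewrite -leqNgt ltnW.
rewrite (iotaDl 1 0) count_map -(subnKC (ltnW im)) iotaD count_cat add0n.
have -> : count (preim (addn 1) (fun x => pval s x < v)%N) (iota i (m - i)) = 0%N.
  apply/eqP; rewrite -leqn0 leqNgt -has_count; apply/hasP => -[j].
  rewrite mem_iota subnKC ?(ltnW im) // => /andP [ij jm] /=; rewrite add1n => jv.
  move: ij; rewrite leq_eqVlt => /orP [/eqP ij|ij]; first by rewrite -ij /v ltnn in jv.
  by move: (hfree i.+1 j.+1 (ltn0Sn _) ij jm); rewrite jv small.
rewrite addn0 => <-.
apply: eq_in_count => j; rewrite mem_iota add0n => /andP [_ ji] /=.
rewrite add1n nth_cut_head ?(ltn_trans ji im) // cut_letter_eqN1.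
apply/idP/idP => [ja | jv]; last exact: ltn_trans jv small.
rewrite ltn_neqAle; apply/andP; split.
  by apply/eqP => /(pval_inj (ltn_trans ji im) im) [] /eqP; rewrite ltn_eqF.
rewrite leqNgt; apply/negP => vj.
by move: (hfree j.+1 i.+1 (ltn0Sn _) ji im); rewrite vj ja.
Qed.

Lemma uncut_cut_head s x :
  head321free s -> (x <= m)%N -> uncut (cut_head s) x = pval s x.
Proof.
move=> hfree; case: x => [|i] im /=; first by rewrite size_cut_head negs_before_cut_head.
rewrite nth_cut_head // cut_letter_eqN1 size_cut_head negs_before_cut_head.
case: ifP => small; first exact: negs_before_cut_head_below.
by rewrite /cut_letter small /= subnKC // leqNgt small.
Qed.


Lemma cut_head_inj s t :
  head321free s -> head321free t -> cut_head s = cut_head t -> s = t.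
Proof.
move=> hs ht e; apply/permP => x; apply: val_inj.
have xm : (x <= m)%N by rewrite -ltnS ltn_ord.
move: (uncut_cut_head hs xm) (uncut_cut_head ht xm); rewrite e /pval inord_val.
by move=> es et; exact: etrans (esym es) et.
Qed.

Section Uncut.
Variable w : seq int.
Hypotheses (size_w : size w = m) (arr_w : arr_word w).

Let letter_pos i : (i < m)%N -> (w`_i != -1)%R -> (0 < w`_i)%R.
Proof. by rewrite -size_w; apply: arr_word_pos. Qed.

Lemma negs_before_add_pos : (negs_before w m + size (pos_part w))%N = m.
Proof.
have -> : negs_before w m = count (pred1 (-1)%R) w.
  by rewrite /negs_before -size_w -[in RHS](mkseq_nth 0%R w) /mkseq count_map.
rewrite size_filter -[RHS]size_w -(count_predC (fun x => 0 < x)%R w) addnC.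
congr addn; apply: eq_in_count => x xw /=.
case/andP: arr_w => /allP /(_ x xw) /orP [/eqP -> | x0] _.
  by rewrite eqxx ltr0N1.
by rewrite x0 (gt_eqF (lt_trans (ltrN10 _) x0)).
Qed.

Lemma uncut_neg i : (i < m)%N -> (w`_i == -1)%R -> (uncut w i.+1 < negs_before w m)%N.
Proof. by move=> im wi; rewrite /= wi negs_before_lt. Qed.

Lemma uncut_pos i : (i < m)%N -> (w`_i != -1)%R ->
  (negs_before w m < uncut w i.+1 <= m)%N.
Proof.
move=> im wi; rewrite /= (negbTE wi) size_w.
have wi_pos := letter_pos im wi.
apply/andP; split.
  by rewrite -{1}[negs_before w m]addn0 ltn_add2l absz_gt0 gt_eqF.
rewrite -[X in (_ <= X)%N]negs_before_add_pos leq_add2l.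
by apply: (arr_word_pos_le arr_w) wi_pos; rewrite mem_nth ?size_w.
Qed.

Lemma uncut_head : uncut w 0 = negs_before w m.
Proof. by rewrite /= size_w. Qed.

Lemma uncut_le x : (x <= m)%N -> (uncut w x <= m)%N.
Proof.
have negs_le : (negs_before w m <= m)%N by rewrite -{2}negs_before_add_pos leq_addr.
case: x => [|i] im; first by rewrite uncut_head.
case: (boolP (w`_i == -1)%R) => wi; last by case/andP: (uncut_pos im wi).
exact: ltnW (leq_trans (uncut_neg im wi) negs_le).
Qed.

Lemma uncut_inj : {in [pred x | x <= m]%N &, injective (uncut w)}.
Proof.
have not_head i : (i < m)%N -> uncut w i.+1 != negs_before w m.
  move=> im; case: (boolP (w`_i == -1)%R) => wi; first by rewrite ltn_eqF ?uncut_neg.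
  by case/andP: (uncut_pos im wi) => lt _; rewrite gtn_eqF.
move=> [|i] [|j]; rewrite !inE => im jm //; rewrite ?uncut_head.
- by move=> e; have := not_head j jm; rewrite -e eqxx.
- by move=> e; have := not_head i im; rewrite e eqxx.
move=> e; congr _.+1.
case: (boolP (w`_i == -1)%R) => wi; case: (boolP (w`_j == -1)%R) => wj.
- move: e; rewrite /= wi wj => e; case: (ltngtP i j) => // [ij|ji].
    by have := negs_before_lt ij wi; rewrite e ltnn.
  by have := negs_before_lt ji wj; rewrite e ltnn.
- have := uncut_neg im wi; case/andP: (uncut_pos jm wj) => lt _.
  by rewrite e => /(ltn_trans lt); rewrite ltnn.
- have := uncut_neg jm wj; case/andP: (uncut_pos im wi) => lt _.
  by rewrite -e => /(ltn_trans lt); rewrite ltnn.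
move: e; rewrite /= (negbTE wi) (negbTE wj) => /addnI e.
apply: (arr_word_pos_inj arr_w); rewrite ?size_w ?letter_pos //.
by rewrite -(gtz0_abs (letter_pos im wi)) -(gtz0_abs (letter_pos jm wj)) e.
Qed.

Let uncut_ord (x : 'I_m.+1) : 'I_m.+1 := inord (uncut w x).

Lemma uncut_ord_inj : injective uncut_ord.
Proof.
move=> x y /(congr1 (@nat_of_ord _)).
rewrite (inordK (uncut_le (ltn_ord x))) (inordK (uncut_le (ltn_ord y))).
by move/uncut_inj; rewrite !inE => /(_ (ltn_ord x) (ltn_ord y)) /val_inj.
Qed.

Lemma pval_uncut x : (x <= m)%N -> pval (perm uncut_ord_inj) x = uncut w x.
Proof.
move=> xm; rewrite /pval permE /uncut_ord (inordK (xm : x < m.+1)%N).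
by rewrite (inordK (uncut_le xm : _ < m.+1)%N).
Qed.

Lemma head321free_uncut : head321free (perm uncut_ord_inj).
Proof.
move=> j l j0 jl lm; have jm := ltnW (leq_trans jl lm).
rewrite !pval_uncut // uncut_head; apply/negP => /andP [lj j_small].
case: j j0 jl jm lj j_small => [|i] // _ il im lj i_small.
case: l il lm lj => [|k] // ik km ki.
case: (boolP (w`_i == -1)%R) => wi; last first.
  case/andP: (uncut_pos im wi) => i_big _.
  by have := ltn_trans i_big i_small; rewrite ltnn.
case: (boolP (w`_k == -1)%R) => wk; last first.
  case/andP: (uncut_pos km wk) => k_big _.
  by have := ltn_trans (ltn_trans k_big ki) i_small; rewrite ltnn.
move: ki; rewrite /= wi wk ltnNge => /negP; apply.
exact/ltnW/negs_before_lt.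
Qed.

Lemma cut_head_uncut : cut_head (perm uncut_ord_inj) = w.
Proof.
apply: (@eq_from_nth _ 0%R); first by rewrite size_cut_head size_w.
move=> i; rewrite size_cut_head => im.
rewrite nth_cut_head // !pval_uncut // uncut_head /cut_letter.
case: (boolP (w`_i == -1)%R) => wi; first by rewrite uncut_neg // (eqP wi).
case/andP: (uncut_pos im wi) => head_lt _; rewrite ltnNge (ltnW head_lt) /= (negbTE wi).
by rewrite size_w addKn gtz0_abs ?letter_pos.
Qed.

Lemma cut_head_surj : exists2 s, head321free s & cut_head s = w.
Proof.
by exists (perm uncut_ord_inj); [apply: head321free_uncut | apply: cut_head_uncut].
Qed.

End Uncut.

End PermutationSide.

Theorem theorem4p3 (n k : nat) : (1 <= n)%N ->
  size [seq w <- P2 n.-1 | avoids pat321 w & des w == k] =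
  #|[set s : 'S_n | avoids pat321 (perm_word s) & peaks s == k]|.
Proof.
case: n => [//|m] _ /=; rewrite cardE -(size_map (@cut_head m)).
apply/perm_size/uniq_perm; first by rewrite filter_uniq // undup_uniq.
  rewrite map_inj_in_uniq ?enum_uniq // => s t; rewrite !mem_enum !inE.
  move=> /andP [/avoids321P/avoids321_perm_word/pval_avoids321_head hs _].
  move=> /andP [/avoids321P/avoids321_perm_word/pval_avoids321_head ht _].
  exact: cut_head_inj.
move=> w; rewrite mem_filter mem_P2; apply/idP/mapP.
  case/andP => /andP [/avoids321P avw /eqP <-] /andP [/eqP size_w arr_w].
  have [s hs cut_s] := cut_head_surj size_w arr_w.
  have avs : pval_avoids321 s by apply: cut_head_avoids321 hs _; rewrite cut_s.
  exists s; rewrite // mem_enum inE -cut_s des_cut_head // eqxx andbT.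
  exact/avoids321P/avoids321_perm_word.
case=> s; rewrite mem_enum inE => /andP [/avoids321P/avoids321_perm_word avs /eqP <-].
move=> ->.
rewrite des_cut_head // eqxx size_cut_head eqxx arr_word_cut_head /= !andbT.
exact/avoids321P/avoids321_cut_head.
Qed.
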